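(* Consider Algorithm GEN with parameter $t_0$ on an instance satisfying the standing assumption, with an edge labeling as in the context. For each edge $(i,u)$, let $q_{i,u}(t)$ be the probability that $(i,u)$ has been matched by time $t$. Then for every $t\in[0,1]$: - for every first-class-labeled edge $(i,u)$, we have $q_{i,u}(t)/x_{iu}=q_1(t)/(1-\ln 2)$; - for every second-class-labeled edge $(i,u)$, we have $q_{i,u}(t)/x_{iu}=q_2(t)/\ln 2$.
   Context: **Model.** Poisson arrival model. Each online type $i$ independently arrives according to a Poisson process of rate $\lambda_i$ on $[0,1]$. On arrival, a vertex is immediately and irrevocably matched to an unmatched offline neighbor or discarded. Each offline vertex is matched at most once. The instance is a bipartite graph $(I,J,E)$ with rates $\lambda_i>0$. **Standing assumption.** There are values $x_{ij}\ge0$ (an optimal Jaillet–Lu LP solution) with $\sum_i x_{ij}=1$ for all $j$, and each type is one of two kinds: - first-class: one neighbor $j$, with $x_{ij}=\lambda_i$; - second-class: two neighbors $j_1,j_2$, with $x_{ij_1}=x_{ij_2}=\lambda_i/2$. **Labeling.** Each edge is labeled first-class or second-class. Edges of first-class types are labeled first-class. For every $j$, the first-class-labeled edges at $j$ have total $x$-value $1-\ln2$. **Reference process.** $H$ has offline vertices $a,b$; a type of rate $2\ln2$ adjacent to both; and types of rate $1-\ln2$ adjacent only to $a$, resp. only to $b$. Algorithm RES with parameter $t_0$ works as follows: - single-neighbor arrivals are matched if their neighbor is unmatched; - a two-neighbor arrival at time $t>t_0$ with an unmatched neighbor is matched to a uniformly random unmatched neighbor. On $H$ under RES: - $f(t)$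 is the probability that a given offline vertex is matched by time $t$; - $g(t)$ is the probability that both are, and $\bar g=1-g$; - $q_1(t)$ is the probability that a particular single-neighbor edge has been matched by time $t$; - $q_2(t)$ is the same for a particular edge of the two-neighbor type. **Algorithm GEN (parameter $t_0$).** Under GEN, $g_{u,v}(t)$ is the probability that both $u$ and $v$ are matched by time $t$, and $\bar g_{u,v}=1-g_{u,v}$. Edges are used only if their offline endpoint is unmatched. - A first-class arrival is matched to its neighbor if possible. - A second-class arrival of type $i$ with neighbors $u,v$ chooses at most one edge, with disjoint probabilities: - each first-class-labeled edge $(i,u)$ with probability $1/2$; - if the arrival time is $t>t_0$, each second-class-labeled edge $(i,u)$ with probability $\bar g(t)/(2\bar g_{u,v}(t))$ if $v$ is unmatched, or $\bar g(t)/\bar g_{u,v}(t)$ if $v$ is matched. *)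

From HB Require Import structures.
From mathcomp Require Import all_boot all_order all_algebra.
From mathcomp Require Import all_classical all_reals all_analysis.
Set Implicit Arguments. Unset Strict Implicit. Unset Printing Implicit Defensive.
Import Order.TTheory GRing.Theory Num.Theory.
Import numFieldNormedType.Exports.
Local Open Scope classical_set_scope.
Local Open Scope ring_scope.

(* I = online types, J = offline vertices.  A state records, for each  *)
(* offline vertex j, either None (unmatched) or Some i (matched to an  *)
(* arrival of type i, i.e. via edge (i,j)).  Since arrivals are        *)
(* independent Poisson processes and the algorithms' decisions depend  *)
(* only on the arrival time, the arriving type and the current state,  *)
(* the state evolves as a continuous-time Markov jump process; its law *)
(* p t s = Pr[state at time t = s] is described by the Kolmogorov      *)
(* forward equation below.                                             *)
(* A rate function  rate s i j  is  lambda_i * Pr[an arrival of type i *)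
(* in state s is matched to j]; it is only used when j is unmatched.   *)

Definition state (I J : finType) := {ffun J -> option I}.

Definition empty_state (I J : finType) : state I J := [ffun _ => None].

Definition assign (I J : finType) (s : state I J) (j : J) (i : I) : state I J :=
  [ffun k => if k == j then Some i else s k].

Definition forward_rhs (R : realType) (I J : finType)
  (rate : state I J -> I -> J -> R) (pt : state I J -> R) (s : state I J) : R :=
  \sum_(s' : state I J) \sum_(i : I) \sum_(j : J)
     (if (s' j == None) && (assign s' j i == s) then pt s' * rate s' i j else 0)
  - pt s * \sum_(i : I) \sum_(j : J) (if s j == None then rate s i j else 0).

(* p is the law of the process on [0,1] started from the empty matching;
   rate t is the (time dependent) rate function, whose only possible
   discontinuity in time is at t0. *)
Definition is_law (R : realType) (I J : finType) (t0 : R)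
  (rate : R -> state I J -> I -> J -> R) (p : R -> state I J -> R) : Prop :=
  [/\ (forall s, p 0 s = (if s == empty_state I J then 1 else 0)),
      (forall s, {within `[0, 1], continuous (fun t => p t s)}) &
      (forall s t, 0 < t < 1 -> t != t0 ->
         is_derive t 1 (fun t => p t s) (forward_rhs (rate t) (p t) s))].

Definition edge_prob (R : realType) (I J : finType) (p : R -> state I J -> R)
  (t : R) (i : I) (u : J) : R :=
  \sum_(s : state I J | s u == Some i) p t s.

Definition both_prob (R : realType) (I J : finType) (p : R -> state I J -> R)
  (t : R) (u v : J) : R :=
  \sum_(s : state I J | (s u != None) && (s v != None)) p t s.

(* Offline vertices: 'I_2, with a = 0, b = 1.                          *)
(* Types: 'I_3, with 0 = the two-neighbour type (rate 2 ln 2),         *)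
(* 1 = single-neighbour type at a, 2 = single-neighbour type at b      *)
(* (rates 1 - ln 2).                                                   *)

Definition Ha : 'I_2 := ord0.
Definition Hb : 'I_2 := ord_max.
Definition Hboth : 'I_3 := ord0.
Definition Honly_a : 'I_3 := inord 1.
Definition Honly_b : 'I_3 := inord 2.

Definition Hother (w : 'I_2) : 'I_2 := if w == Ha then Hb else Ha.

Definition RES_rate (R : realType) (t0 : R) (t : R)
  (s : state 'I_3 'I_2) (i : 'I_3) (w : 'I_2) : R :=
  if i == Honly_a then (if w == Ha then 1 - ln 2 else 0)
  else if i == Honly_b then (if w == Hb then 1 - ln 2 else 0)
  else
    if t0 < t then
      (2 * ln 2) * (if s (Hother w) == None then 1 / 2 else 1)
    else 0.

Definition H_g (R : realType) (pH : R -> state 'I_3 'I_2 -> R) (t : R) : R :=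
  both_prob pH t Ha Hb.
Definition H_q1 (R : realType) (pH : R -> state 'I_3 'I_2 -> R) (t : R) : R :=
  edge_prob pH t Honly_a Ha.
Definition H_q2 (R : realType) (pH : R -> state 'I_3 'I_2 -> R) (t : R) : R :=
  edge_prob pH t Hboth Ha.

Definition first_class (R : realType) (I J : finType) (E : I -> J -> bool)
  (lam : I -> R) (x : I -> J -> R) (i : I) : Prop :=
  exists j, [set k | E i k] = [set j] /\ x i j = lam i.

Definition second_class (R : realType) (I J : finType) (E : I -> J -> bool)
  (lam : I -> R) (x : I -> J -> R) (i : I) : Prop :=
  exists j1 j2, [/\ j1 != j2, [set k | E i k] = [set j1; j2],
                    x i j1 = lam i / 2 & x i j2 = lam i / 2].

Definition standing_assumption (R : realType) (I J : finType)
  (E : I -> J -> bool) (lam : I -> R) (x : I -> J -> R) : Prop :=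
  [/\ (forall i, 0 < lam i),
      (forall i j, E i j -> 0 <= x i j),
      (forall j, \sum_(i | E i j) x i j = 1) &
      (forall i, first_class E lam x i \/ second_class E lam x i)].

(* lab i j = true : edge (i,j) is labelled first-class;
   lab i j = false : edge (i,j) is labelled second-class. *)
Definition valid_labeling (R : realType) (I J : finType)
  (E : I -> J -> bool) (lam : I -> R) (x : I -> J -> R)
  (lab : I -> J -> bool) : Prop :=
  (forall i j, E i j -> first_class E lam x i -> lab i j) /\
  (forall j, \sum_(i | E i j && lab i j) x i j = 1 - ln 2).

(* Algorithm GEN.  gbarH t = 1 - g(t) from the reference process,      *)
(* p is the law of GEN itself (used for g_{u,v}).                      *)
(* A type with a single neighbour is first-class; otherwise it is      *)
(* second-class with neighbours w and v (the unique neighbour v != w). *)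

Definition GEN_rate (R : realType) (I J : finType) (E : I -> J -> bool)
  (lam : I -> R) (lab : I -> J -> bool) (t0 : R)
  (pH : R -> state 'I_3 'I_2 -> R) (p : R -> state I J -> R)
  (t : R) (s : state I J) (i : I) (w : J) : R :=
  if ~~ E i w then 0
  else if #|[set k | E i k]| == 1%N then lam i
  else lam i *
    (if lab i w then 1 / 2
     else if t0 < t then
       \sum_(v | E i v && (v != w))
         (let gbar := 1 - H_g pH t in
          let gbar_wv := 1 - both_prob p t w v in
          if s v == None then gbar / (2 * gbar_wv) else gbar / gbar_wv)
     else 0).

(* The GEN rates are tuned so that every offline vertex stays unmatched with
   the probability h(t) with which a vertex of the reference process H does.
   Writing d_u for the difference of the two probabilities, the forward
   equations give d_u' = -(1 - ln 2) d_u - sum_i k_i (d_u - d_v) with weights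
   k_i >= 0: the factor 1 / Pr[u and v not both matched] in the rates cancels
   the corresponding term of the flow out of "u unmatched". Hence sum_u d_u^2
   satisfies a Gronwall inequality and vanishes. The weights are finite and the
   law stays nonnegative only while Pr[u and v not both matched] > 0, which the
   invariant itself guarantees (that probability is at least h(t) > 0), so the
   invariant is propagated by continuity induction over [0, 1].
   Once d = 0, the flow through a first-class-labeled edge (i, u) is x_iu h(t)
   and through a second-class-labeled one x_iu (1 - g(t)) after t0; these are
   x_iu / (1 - ln 2) resp. x_iu / ln 2 times the flows q1', q2' of H, and
   both sides vanish at time 0. *)

From HB Require Import structures.
From mathcomp Require Import all_boot all_order all_algebra.
From mathcomp Require Import all_classical all_reals all_analysis.
From mathcomp Require Import ring lra.
Set Implicit Arguments. Unset Strict Implicit. Unset Printing Implicit Defensive.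
Import Order.TTheory GRing.Theory Num.Theory.
Import numFieldNormedType.Exports.
Local Open Scope classical_set_scope.
Local Open Scope ring_scope.

(** * Real analysis on an interval *)

Section RealAnalysis.
Variable R : realType.

Lemma subset_itv_cc (a b c d : R) : c <= a -> b <= d -> `[a, b] `<=` `[c, d].
Proof. by move=> ca bd; apply: subset_itv; rewrite bnd_simp. Qed.

Lemma within_continuous_cst (A : set R) (c : R) : {within A, continuous (fun _ : R => c)}.
Proof. exact: continuous_subspaceT (@cst_continuous _ _ _). Qed.

Lemma within_continuousM (A : set R) (f g : R -> R) : {within A, continuous f} ->
  {within A, continuous g} -> {within A, continuous (fun t => f t * g t)}.
Proof. by move=> cf cg x; apply: cvgM; [exact: cf | exact: cg]. Qed.

Lemma within_continuous_big (T : Type) (r : seq T) (P : pred T) (f : T -> R -> R)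
    (A : set R) :
  (forall s, P s -> {within A, continuous (f s)}) ->
  {within A, continuous (fun t => \sum_(s <- r | P s) f s t)}.
Proof.
move=> cf; elim: r => [|a r IH]; first by under eq_fun do rewrite big_nil;
  exact: within_continuous_cst.
case Pa: (P a); under eq_fun do rewrite big_cons Pa; last exact: IH.
exact: within_continuousD (cf a Pa) IH.
Qed.

Lemma within_continuous_epsilon (f : R -> R) (A : set R) c :
  {within A, continuous f} -> A c -> forall e, 0 < e ->
  exists2 d, 0 < d & forall t, A t -> `|t - c| < d -> `|f t - f c| < e.
Proof.
move=> /subspace_continuousP cf Ac e e0.
have := cf c Ac => /cvgrPdist_lt /(_ e e0).
rewrite near_withinE => /nbhs_ballP [d /= d0 ball_fe].
exists d => // t At tc; rewrite distrC; apply: ball_fe => //.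
by rewrite /ball /= distrC.
Qed.

Lemma is_derive_mul (f g : R -> R) (x df dg : R) : is_derive x 1 f df ->
  is_derive x 1 g dg -> is_derive x 1 (fun t => f t * g t) (f x * dg + g x * df).
Proof. by move=> ff gg; have := is_deriveM ff gg. Qed.

Lemma is_derive_sub (f g : R -> R) (x df dg : R) : is_derive x 1 f df ->
  is_derive x 1 g dg -> is_derive x 1 (fun t => f t - g t) (df - dg).
Proof. by move=> ff gg; have := is_deriveB ff gg. Qed.

Lemma is_derive_scale (f : R -> R) (c x df : R) : is_derive x 1 f df ->
  is_derive x 1 (fun t => c * f t) (c * df).
Proof.
by move=> ff; have := is_derive_mul (is_derive_cst c x 1) ff; rewrite mulr0 addr0.
Qed.

Lemma is_derive_big (T : Type) (r : seq T) (P : pred T) (f : T -> R -> R)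
    (df : T -> R) (x : R) :
  (forall s, P s -> is_derive x 1 (f s) (df s)) ->
  is_derive x 1 (fun t => \sum_(s <- r | P s) f s t) (\sum_(s <- r | P s) df s).
Proof.
move=> ff; elim: r => [|a r IH].
  by rewrite big_nil; under eq_fun do rewrite big_nil; exact: is_derive_cst.
case Pa: (P a); rewrite big_cons Pa; under eq_fun do rewrite big_cons Pa; last exact: IH.
by have := is_deriveD (ff a Pa) IH.
Qed.

Lemma is_derive_expR_scale (C x : R) :
  is_derive x 1 (fun t => expR (C * t)) (expR (C * x) * C).
Proof.
have dl : is_derive x 1 (fun t : R => C * t) C.
  by have := is_derive_scale C (is_derive_id x 1); rewrite mulr1.
exact: is_derive1_comp (is_derive_expR _) dl.
Qed.

Lemma within_continuous_expR_scale (A : set R) (C : R) :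
  {within A, continuous (fun t => expR (C * t))}.
Proof.
apply: continuous_subspaceT => x.
apply: (@continuous_comp _ _ _ (fun t : R => C * t) expR); last exact: continuous_expR.
by apply: cvgM; [exact: cvg_cst | exact: cvg_id].
Qed.

Lemma is_derive_ge0_le (y : R -> R) (a b : R) : a <= b ->
  {within `[a, b], continuous y} ->
  (forall t, a < t < b -> exists2 d, is_derive t 1 y d & 0 <= d) -> y a <= y b.
Proof.
move=> ab cy dy; apply: (@ger0_derive1_ndecr R y a b) => //.
- by move=> t; rewrite in_itv /= => /dy [d [? _] _].
- by move=> t; rewrite in_itv /= => /dy [d dd d0]; rewrite derive1E derive_val.
Qed.

Lemma is_derive_ge0_le_except (y : R -> R) (t0 a b : R) : a <= b ->
  {within `[a, b], continuous y} ->
  (forall t, a < t < b -> t != t0 -> exists2 d, is_derive t 1 y d & 0 <= d) ->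
  y a <= y b.
Proof.
move=> ab cy dy; have [/andP[at0 t0b]|t0_out] := boolP (a < t0 < b).
  apply: (@le_trans _ _ (y t0)); apply: is_derive_ge0_le; rewrite ?ltW //.
  - exact: continuous_subspaceW (subset_itv_cc (lexx a) (ltW t0b)) cy.
  - move=> t /andP[a_t tt0]; apply: dy; first by rewrite a_t (lt_trans tt0 t0b).
    by rewrite lt_eqF.
  - exact: continuous_subspaceW (subset_itv_cc (ltW at0) (lexx b)) cy.
  - move=> t /andP[t0t tb]; apply: dy; first by rewrite tb (lt_trans at0 t0t).
    by rewrite gt_eqF.
apply: is_derive_ge0_le => // t tab; apply: dy => //.
by apply: contraNneq t0_out => <-.
Qed.

Lemma is_derive0_const (y : R -> R) (t0 a b : R) : {within `[a, b], continuous y} ->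
  (forall t, a < t < b -> t != t0 -> is_derive t 1 y 0) ->
  forall t, a <= t <= b -> y t = y a.
Proof.
move=> cy dy t /andP[a_t tb].
have dy' t1 : a < t1 < t -> t1 != t0 -> is_derive t1 1 y 0.
  by move=> /andP[at1 t1t]; apply: dy; rewrite at1 (lt_le_trans t1t tb).
have cy' := continuous_subspaceW (subset_itv_cc (lexx a) tb) cy.
apply/eqP; rewrite eq_le; apply/andP; split.
  suff : - y a <= - y t by rewrite lerN2.
  apply: (@is_derive_ge0_le_except (fun t => - y t) t0) => //.
    by move=> x; apply: cvgN; exact: cy'.
  by move=> t1 t1in t1t0; exists (- 0); [exact: is_deriveN (dy' _ _ _) | rewrite oppr0].
apply: (@is_derive_ge0_le_except y t0) => // t1 t1in t1t0.
by exists 0 => //; exact: dy'.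
Qed.

(* Grönwall in integrating-factor form: [expR (C t) * y t] has derivative
   [expR (C t) * (y' + C y)]. *)
Lemma gronwall_expR_le (y : R -> R) (C t0 a b : R) : a <= b ->
  {within `[a, b], continuous y} ->
  (forall t, a < t < b -> t != t0 -> exists2 d, is_derive t 1 y d & - C * y t <= d) ->
  expR (C * a) * y a <= expR (C * b) * y b.
Proof.
move=> ab cy dy.
apply: (@is_derive_ge0_le_except (fun t => expR (C * t) * y t) t0) => //.
  by apply: within_continuousM cy; exact: within_continuous_expR_scale.
move=> t tab tt0; have [d yd Cd] := dy t tab tt0.
exists (expR (C * t) * d + y t * (expR (C * t) * C)).
  exact: is_derive_mul (is_derive_expR_scale C t) yd.
rewrite mulrCA -mulrDr mulr_ge0 ?expR_ge0 //; lra.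
Qed.

Lemma gronwall_eq0 (S : R -> R) (C t0 a b : R) : {within `[a, b], continuous S} ->
  S a = 0 -> (forall t, a <= t <= b -> 0 <= S t) ->
  (forall t, a < t < b -> t != t0 -> exists2 d, is_derive t 1 S d & d <= C * S t) ->
  forall t, a <= t <= b -> S t = 0.
Proof.
move=> cS Sa S_ge0 dS t /andP[a_t tb].
have := @gronwall_expR_le (fun t => - S t) (- C) t0 a t a_t.
rewrite Sa oppr0 mulr0 => /(_ _ _)/wrap[].
- by move=> x; apply: cvgN; exact: continuous_subspaceW (subset_itv_cc (lexx a) tb) cS x.
- move=> t1 /andP[at1 t1t] t1t0.
  have [d Sd dC] := dS t1 ltac:(by rewrite at1 (lt_le_trans t1t tb)) t1t0.
  by exists (- d); [exact: is_deriveN | lra].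
rewrite mulrN oppr_ge0 pmulr_rle0 ?expR_gt0 // => St.
by apply/eqP; rewrite eq_le St S_ge0 ?a_t.
Qed.

Lemma within_continuous_left_ge0 (f : R -> R) (a b u : R) :
  {within `[a, b], continuous f} -> a < u <= b ->
  (forall t, a <= t < u -> 0 <= f t) -> 0 <= f u.
Proof.
move=> cf /andP[au ub] f_ge0; rewrite leNgt; apply/negP => fu.
have [d d0 fd] := within_continuous_epsilon cf
  (ltac:(by rewrite /= in_itv /= ub ltW) : [set` `[a, b]] u) (ltac:(lra) : 0 < - f u).
pose m := Num.min d (u - a) / 2.
have m0 : 0 < m by rewrite divr_gt0 // lt_min d0 subr_gt0.
have [md mu] : m < d /\ m < u - a.
  have : Num.min d (u - a) <= d /\ Num.min d (u - a) <= u - a by split; rewrite ge_min lexx ?orbT.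
  rewrite /m; lra.
have := f_ge0 (u - m) ltac:(apply/andP; split; lra).
have := fd (u - m) ltac:(rewrite /= in_itv /=; apply/andP; split; lra) ltac:(
  rewrite addrAC subrr add0r normrN gtr0_norm).
have := ler_norm (f (u - m) - f u); lra.
Qed.

Lemma within_continuous_left_eq (f g : R -> R) (a b u : R) :
  {within `[a, b], continuous f} -> {within `[a, b], continuous g} -> a < u <= b ->
  (forall t, a <= t < u -> f t = g t) -> f u = g u.
Proof.
move=> cf cg uab fg; apply/eqP.
rewrite eq_le -[f u <= g u]subr_ge0 -[g u <= f u]subr_ge0.
apply/andP; split.
  apply: (@within_continuous_left_ge0 (fun t => g t - f t) a b) => //.
    exact: within_continuousB.
  by move=> t /fg ->; rewrite subrr.
apply: (@within_continuous_left_ge0 (fun t => f t - g t) a b) => //.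
  exact: within_continuousB.
by move=> t /fg ->; rewrite subrr.
Qed.

(* If [y] can only increase while it is negative, it never becomes negative: past
   the last time [c] before [t] at which [y >= 0], [y] would be nondecreasing. *)
Lemma is_derive_ge0_when_neg (y : R -> R) (t0 a b : R) :
  {within `[a, b], continuous y} -> 0 <= y a ->
  (forall t, a < t < b -> t != t0 -> y t < 0 ->
     exists2 d, is_derive t 1 y d & 0 <= d) ->
  forall t, a <= t <= b -> 0 <= y t.
Proof.
move=> cy ya dy t /andP[a_t tb]; rewrite leNgt; apply/negP => yt.
pose A := [set s | a <= s <= t /\ 0 <= y s].
have Aa : A a by rewrite /A /= lexx a_t.
have supA : has_sup A by split; [exists a | exists t => s [/andP[_ ?] _]].
pose c := sup A.
have ac : a <= c by exact: sup_upper_bound.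
have ct : c <= t by apply: ge_sup; [exists a | move=> s [/andP[_ ?] _]].
have cab : [set` `[a, b]] c by rewrite /= in_itv /= ac (le_trans ct tb).
have yc : 0 <= y c.
  rewrite leNgt; apply/negP => yc.
  have yc0 : 0 < - y c by rewrite oppr_gt0.
  have [d d0 yd] := within_continuous_epsilon cy cab yc0.
  have [s As cs] := sup_adherent d0 supA.
  have sc : s <= c by exact: sup_upper_bound.
  case: As => /andP[a_s st] ys.
  have := yd s ltac:(by rewrite /= in_itv /= a_s (le_trans st tb))
    ltac:(by rewrite ler0_norm ?subr_le0 //; rewrite -/c in cs; lra).
  have := ler_norm (y s - y c); lra.
have neg s : c < s <= t -> y s < 0.
  move=> /andP[cs st]; rewrite ltNge; apply/negP => ys.
  have : s <= c by apply: sup_upper_bound => //; rewrite /A /= st (le_trans ac (ltW cs)).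
  by rewrite leNgt cs.
have ct' : c < t by rewrite lt_neqAle ct andbT; apply: contraTneq yt => <-; rewrite -leNgt.
suff : y c <= y t by lra.
apply: (@is_derive_ge0_le_except y t0) => //.
  by apply: continuous_subspaceW cy; apply: subset_itv_cc.
move=> s /andP[cs st] st0; apply: dy => //.
  by rewrite (le_lt_trans ac cs) (lt_le_trans st tb).
by apply: neg; rewrite cs ltW.
Qed.

Lemma continuity_induction (P : R -> Prop) :
  P 0 ->
  (forall u, 0 < u <= 1 -> (forall t, 0 <= t < u -> P t) -> P u) ->
  (forall u, 0 <= u < 1 -> (forall t, 0 <= t <= u -> P t) ->
     exists2 d, 0 < d & forall t, u < t < u + d -> t <= 1 -> P t) ->
  forall t, 0 <= t <= 1 -> P t.
Proof.
move=> P0 P_left P_right.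
pose A := [set u | 0 <= u <= 1 /\ forall t, 0 <= t <= u -> P t].
have A0 : A 0.
  split; first by rewrite lexx ler01.
  by move=> t t0; suff -> : t = 0 by []; apply/eqP; rewrite eq_le andbC.
have supA : has_sup A by split; [exists 0 | exists 1 => x [/andP[_ ?] _]].
pose s := sup A.
have s0 : 0 <= s by exact: sup_upper_bound.
have s1 : s <= 1 by apply: ge_sup; [exists 0 | move=> x [/andP[_ ?] _]].
have below t : 0 <= t < s -> P t.
  move=> /andP[t0 ts].
  have [e [_ Pe] se] := sup_adherent (ltac:(by rewrite subr_gt0) : 0 < s - t) supA.
  by apply: Pe; rewrite t0 /=; rewrite -/s in se; lra.
have As : A s.
  split; first by rewrite s0 s1.
  have Ps : P s.
    have [->|s_neq0] := eqVneq s 0; first exact: P0.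
    by apply: P_left => //; rewrite s1 lt_neqAle eq_sym s_neq0 s0.
  move=> t /andP[t0]; rewrite le_eqVlt => /orP[/eqP -> //|ts].
  by apply: below; rewrite t0.
suff s_eq1 : s = 1 by move=> t t01; apply: As.2; rewrite s_eq1.
apply/eqP; rewrite eq_le s1 leNgt; apply/negP => s_lt1.
have [d d0 Pd] := P_right s (ltac:(by rewrite s0 s_lt1)) As.2.
pose s' := Num.min (s + d / 2) 1.
have [s'_le s'_le1] : s' <= s + d / 2 /\ s' <= 1 by split; rewrite ge_min lexx ?orbT.
have As' : A s'.
  split; first by rewrite s'_le1 andbT le_min ler01 andbT; lra.
  move=> t /andP[t0 ts']; have [ts|st] := leP t s; first by apply: As.2; rewrite t0.
  by apply: Pd; rewrite ?st; lra.
have : s' <= s by exact: sup_upper_bound.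
by rewrite leNgt lt_min s_lt1 andbT; lra.
Qed.

Lemma fin_common_delta (T : finType) (P : T -> R -> Prop) (c : R) :
  (forall x, exists2 d, 0 < d & forall t, `|t - c| < d -> P x t) ->
  exists2 d, 0 < d & forall t, `|t - c| < d -> forall x, P x t.
Proof.
move=> Pd.
suff [d d0 Hd] : exists2 d, 0 < d &
    forall t, `|t - c| < d -> forall x, x \in enum T -> P x t.
  by exists d => // t tc x; apply: Hd; rewrite ?mem_enum.
elim: (enum T) => [|a r [d d0 Hd]]; first by exists 1.
have [da da0 Ha] := Pd a.
exists (Num.min d da); first by rewrite lt_min d0 da0.
move=> t; rewrite lt_min => /andP[td tda] x; rewrite inE => /orP[/eqP -> |]; first exact: Ha.
exact: Hd.
Qed.

Lemma div_eq_of_is_derive (f g : R -> R) (a b t0 : R) : a != 0 -> b != 0 ->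
  {within `[0, 1], continuous f} -> {within `[0, 1], continuous g} ->
  f 0 = 0 -> g 0 = 0 ->
  (forall t, 0 < t < 1 -> t != t0 ->
     exists2 c, is_derive t 1 f (a * c) & is_derive t 1 g (b * c)) ->
  forall t, 0 <= t <= 1 -> f t / a = g t / b.
Proof.
move=> a_neq0 b_neq0 cf cg f0 g0 dfg t t01.
have := @is_derive0_const (fun t => b * f t - a * g t) t0 0 1.
rewrite f0 g0 !mulr0 subrr => /(_ _ _ t t01)/wrap[].
- by apply: within_continuousB; apply: within_continuousM => //; exact: within_continuous_cst.
- move=> s s01 st0; have [c fc gc] := dfg s s01 st0.
  apply: is_derive_eq (is_derive_sub (is_derive_scale b fc) (is_derive_scale a gc)) _.
  by rewrite mulrCA subrr.
by move/eqP; rewrite subr_eq0 => /eqP bf_ag; apply/eqP; rewrite eqr_div // mulrC bf_ag mulrC.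
Qed.

End RealAnalysis.

Section SquareDeviation.
Variables (R : realFieldType) (T U : finType).

Lemma sum_drift_le (d : T -> R) (a M : R) (P : T -> pred U) (k : U -> T -> R)
    (nb : U -> T -> T) :
  0 <= a -> (forall u i, P u i -> 0 <= k i u) -> (forall u, \sum_(i | P u i) k i u <= M) ->
  \sum_u d u * (- a * d u - \sum_(i | P u i) k i u * (d u - d (nb i u)))
    <= #|T|%:R * M / 2 * \sum_u d u * d u.
Proof.
move=> a_ge0 k_ge0 k_sum; set S := \sum_u d u * d u.
have S_ge0 : 0 <= S by apply: sumr_ge0 => w _; rewrite -expr2 sqr_ge0.
have sq_le v : d v * d v <= S.
  by rewrite /S (bigD1 v) //= lerDl sumr_ge0 // => w _; rewrite -expr2 sqr_ge0.
rewrite (_ : _ * S = \sum_(u : T) M * (S / 2)); last by rewrite sumr_const -mulr_natl; ring.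
apply: ler_sum => u _; rewrite mulrBr mulr_sumr.
have out_le0 : d u * (- a * d u) <= 0.
  by rewrite mulrCA mulNr oppr_le0 mulr_ge0 // -expr2 sqr_ge0.
(* [- d u (d u - d v) <= (d v ^ 2 - d u ^ 2) / 2 <= S / 2] *)
have pair_le i : P u i -> - (d u * (k i u * (d u - d (nb i u)))) <= k i u * (S / 2).
  move=> Pi; rewrite mulrCA -mulrN ler_wpM2l ?k_ge0 //.
  have := sq_le (nb i u); have := sqr_ge0 (d u - d (nb i u)); have := sqr_ge0 (d u).
  rewrite !expr2; nra.
have : - \sum_(i | P u i) d u * (k i u * (d u - d (nb i u))) <= M * (S / 2).
  rewrite -sumrN; apply: le_trans (ler_sum _ pair_le) _.
  by rewrite -mulr_suml ler_wpM2r ?divr_ge0.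
lra.
Qed.

End SquareDeviation.

(** * Forward equations of the matching process *)

Section ForwardEquation.
Variables (R : realType) (I J : finType).
Local Notation st := (state I J).

Definition unmatched_prob (p : R -> st -> R) (t : R) (u : J) : R :=
  \sum_(s : st | s u == None) p t s.

Lemma both_probC (p : R -> st -> R) t (u v : J) : both_prob p t u v = both_prob p t v u.
Proof. by apply: eq_bigl => s; rewrite andbC. Qed.

Definition matched_count (s : st) : nat := #|[pred j | s j != None]|.

Lemma matched_count_assign (s : st) j i : s j == None ->
  matched_count (assign s j i) = (matched_count s).+1.
Proof.
move=> sj; rewrite /matched_count (cardD1 j) inE /assign ffunE eqxx add1n.
congr S; apply: eq_card => k; rewrite !inE ffunE.
by case: (eqVneq k j) => [->|]; rewrite ?(eqP sj).
Qed.

(* The rate of change of [Pr[P]] is the flux of the transitions into [P] minus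
   the flux of those out of it. *)
Lemma sum_forward_rhs (P : pred st) (rate : st -> I -> J -> R) (pt : st -> R) :
  \sum_(s | P s) forward_rhs rate pt s =
  \sum_(s : st) \sum_(i : I) \sum_(j : J) (if s j == None then
      pt s * rate s i j * ((P (assign s j i))%:R - (P s)%:R) else 0).
Proof.
have sum_pick (Q : pred st) (c : bool) (a : st) (X : R) :
    \sum_(s | Q s) (if c && (a == s) then X else 0) = if c && Q a then X else 0.
  rewrite big_mkcond /= (bigD1 a) //= eqxx andbT big1 ?addr0; first by case: (Q a); case: c.
  by move=> s /negbTE sa; rewrite eq_sym sa andbF; case: (Q s).
rewrite /forward_rhs big_split /= sumrN (exchange_big_dep xpredT) //=.
under eq_bigr => s' _.
  rewrite (exchange_big_dep xpredT) //=.
  under eq_bigr => i _.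
    rewrite (exchange_big_dep xpredT) //=.
    under eq_bigr => j _ do rewrite sum_pick.
    over.
  over.
rewrite [X in _ - X]big_mkcond /= -sumrB; apply: eq_bigr => s _.
case: (P s); rewrite ?mulr_sumr ?subr0 -?sumrB; apply: eq_bigr => i _;
  rewrite ?mulr_sumr -?sumrB; apply: eq_bigr => j _;
  by case: (s j == None); case: (P (assign s j i)); rewrite /=; ring.
Qed.

Lemma sum_le_total (pt : st -> R) (P : pred st) : (forall s, 0 <= pt s) ->
  \sum_(s | P s) pt s <= \sum_(s : st) pt s.
Proof. by move=> pt_ge0; rewrite [leRHS](bigID P) lerDl sumr_ge0. Qed.

Lemma sum_free_weighted (pt : st -> R) (u v : J) :
  \sum_(s : st | s u == None) pt s * (if s v == None then 1 else 2) =
  \sum_(s : st | s u == None) pt s + (\sum_(s : st) pt s - \sum_(s : st | s v == None) pt s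
     - \sum_(s : st | (s u != None) && (s v != None)) pt s).
Proof.
rewrite !(big_mkcond (fun s : st => s u == None)) (big_mkcond (fun s : st => s v == None)).
rewrite (big_mkcond (fun s : st => (s u != None) && (s v != None))) /=.
rewrite -!sumrB -big_split /=; apply: eq_bigr => s _.
by case: (s u == None); case: (s v == None) => /=; ring.
Qed.

Lemma sum_free_le_not_both (pt : st -> R) (u v : J) : (forall s, 0 <= pt s) ->
  \sum_(s : st | s u == None) pt s <=
  \sum_(s : st) pt s - \sum_(s : st | (s u != None) && (s v != None)) pt s.
Proof.
move=> pt_ge0; rewrite -subr_ge0 (big_mkcond (fun s : st => s u == None)).
rewrite (big_mkcond (fun s : st => (s u != None) && (s v != None))) /= -!sumrB.
apply: sumr_ge0 => s _; have := pt_ge0 s.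
by case: (s u == None); case: (s v == None) => /=; lra.
Qed.

Section Law.
Variables (t0 : R) (rate : R -> st -> I -> J -> R) (p : R -> st -> R).
Hypothesis law : is_law t0 rate p.

Lemma law_sum_continuous (P : pred st) :
  {within `[0, 1], continuous (fun t => \sum_(s | P s) p t s)}.
Proof. by case: law => _ cp _; apply: within_continuous_big => s _; apply: cp. Qed.

Lemma law_sum_is_derive (P : pred st) t : 0 < t < 1 -> t != t0 ->
  is_derive t 1 (fun t => \sum_(s | P s) p t s)
   (\sum_(s : st) \sum_(i : I) \sum_(j : J) (if s j == None then
      p t s * rate t s i j * ((P (assign s j i))%:R - (P s)%:R) else 0)).
Proof.
move=> t01 tt0; rewrite -sum_forward_rhs; apply: is_derive_big => s _.
by case: law => _ _ dp; apply: dp.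
Qed.

Lemma law_sum_init (P : pred st) : \sum_(s | P s) p 0 s = (P (empty_state I J))%:R.
Proof.
case: law => p0 _ _; under eq_bigr do rewrite p0.
rewrite -big_mkcondr /=; have [Pe|nPe] := boolP (P (empty_state I J)).
  by rewrite (big_pred1 (empty_state I J)) // => s /=; rewrite andbC; case: eqP => // ->.
by rewrite big_pred0 // => s; apply/negP => /andP[Ps /eqP se]; move: nPe; rewrite -se Ps.
Qed.

Lemma edge_prob_continuous i u :
  {within `[0, 1], continuous (fun t => edge_prob p t i u)}.
Proof. exact: law_sum_continuous. Qed.

Lemma edge_prob0 i u : edge_prob p 0 i u = 0.
Proof. by rewrite /edge_prob (law_sum_init (fun s => s u == Some i)) ffunE. Qed.

Lemma law_mass1 t : 0 <= t <= 1 -> \sum_(s : st) p t s = 1.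
Proof.
move=> t01; have := law_sum_init xpredT; rewrite /= mulr1n => <-.
apply: (@is_derive0_const _ (fun t => \sum_(s : st) p t s) t0 0 1) => //.
  exact: law_sum_continuous.
move=> t1 t1_01 t1t0.
apply: (is_derive_eq (law_sum_is_derive xpredT t1_01 t1t0)).
by do 3!(apply: big1 => ? _); rewrite subrr mulr0; case: ifP.
Qed.

(* Induction on the number of matched vertices: a state is entered only from
   states with one fewer matched vertex, so while [p t s < 0] its inflow is
   nonnegative and its outflow [- p t s * rate] is too. *)
Lemma law_ge0 a b : 0 <= a -> b <= 1 ->
  (forall t, a < t < b -> t != t0 -> forall (s : st) i j, s j == None -> 0 <= rate t s i j) ->
  (forall s, 0 <= p a s) -> forall t, a <= t <= b -> forall s, 0 <= p t s.
Proof.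
move=> a0 b1 rate_ge0 pa t tab s.
elim: {s}(matched_count s).+1 {-2}s (ltnSn (matched_count s)) t tab => // n IH s sn t tab.
case: law => _ cp dp.
apply: (@is_derive_ge0_when_neg _ (fun t => p t s) t0 a b) => //.
  exact: continuous_subspaceW (subset_itv_cc a0 b1) (cp s).
move=> t1 /andP[at1 t1b] t1t0 ps_neg; exists (forward_rhs (rate t1) (p t1) s).
  by apply: dp => //; apply/andP; split; lra.
have t1ab : a <= t1 <= b by rewrite !ltW.
have inflow : 0 <= \sum_(s' : st) \sum_(i : I) \sum_(j : J)
    (if (s' j == None) && (assign s' j i == s) then p t1 s' * rate t1 s' i j else 0).
  do 3!(apply: sumr_ge0 => ? _); case: ifP => // /andP[s'j /eqP s'js].
  rewrite mulr_ge0 ?rate_ge0 ?at1 //; apply: IH t1ab.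
  by move: sn; rewrite -s'js matched_count_assign.
have outflow : 0 <= \sum_(i : I) \sum_(j : J) (if s j == None then rate t1 s i j else 0).
  by do 2!(apply: sumr_ge0 => ? _); case: ifP => // sj; rewrite rate_ge0 ?at1.
have := mulr_le0_ge0 (ltW ps_neg) outflow; rewrite /forward_rhs; lra.
Qed.

Lemma edge_prob_is_derive (i0 : I) (u : J) t : 0 < t < 1 -> t != t0 ->
  is_derive t 1 (fun t => edge_prob p t i0 u)
    (\sum_(s : st | s u == None) p t s * rate t s i0 u).
Proof.
move=> t01 tt0.
apply: (is_derive_eq (law_sum_is_derive (fun s => s u == Some i0) t01 tt0)).
rewrite [RHS]big_mkcond /=; apply: eq_bigr => s _.
pose c := if s u == None then p t s * rate t s i0 u else 0.
transitivity (\sum_(i : I) if i == i0 then c else 0); last by rewrite -big_mkcond big_pred1_eq.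
apply: eq_bigr => i _.
transitivity (\sum_(j : J) if j == u then (if i == i0 then c else 0) else 0).
  apply: eq_bigr => j _; rewrite /assign ffunE /c.
  have [->|ju] := eqVneq j u; last by rewrite subrr mulr0; case: ifP.
  case: (s u) => [k|] /=; first by case: ifP.
  have [->|ii0] := eqVneq i i0; first by rewrite eqxx subr0 mulr1.
  by rewrite (_ : (Some i == Some i0) = false) ?subrr ?mulr0 //; apply: contraNF ii0 => /eqP [->].
by rewrite -big_mkcond big_pred1_eq.
Qed.

Lemma unmatched_prob_is_derive (u : J) t : 0 < t < 1 -> t != t0 ->
  is_derive t 1 (fun t => unmatched_prob p t u)
    (- \sum_(i : I) \sum_(s : st | s u == None) p t s * rate t s i u).
Proof.
move=> t01 tt0; apply: (is_derive_eq (law_sum_is_derive (fun s => s u == None) t01 tt0)).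
rewrite -sumrN (exchange_big_dep xpredT) //=; apply: eq_bigr => i _.
rewrite -sumrN [RHS]big_mkcond /=; apply: eq_bigr => s _.
transitivity (\sum_(j : J) if j == u then
    (if s u == None then - (p t s * rate t s i u) else 0) else 0).
  apply: eq_bigr => j _; rewrite /assign ffunE.
  have [->|ju] := eqVneq j u; last by rewrite subrr mulr0; case: ifP.
  by case: (s u) => [k|] //=; rewrite sub0r mulrN1.
by rewrite -big_mkcond big_pred1_eq; case: ifP; rewrite ?oppr0.
Qed.

End Law.
End ForwardEquation.

(** * The reference process *)

Section ReferenceProcess.
Variable R : realType.

Lemma ln2_gt0 : 0 < ln (2 : R).
Proof. by rewrite ln_gt0 // ltr1n. Qed.

Lemma ln2_lt1 : ln (2 : R) < 1.
Proof.
rewrite -[ltRHS](expRK 1) ltr_ln ?posrE ?expR_gt0 //.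
by have := @expR_gt1Dx R 1 (oner_neq0 _); rewrite (_ : 1 + 1 = 2).
Qed.

Definition step_at (t0 t : R) : R := if t0 < t then 1 else 0.

Lemma step_at01 (t0 t : R) : 0 <= step_at t0 t <= 1.
Proof. by rewrite /step_at; case: ifP; rewrite ?lexx ?ler01. Qed.

Lemma H_vertex_cases (w : 'I_2) : w = Ha \/ w = Hb.
Proof. by case: w => -[|[|//]] w2; [left | right]; apply: val_inj. Qed.

Lemma H_types_neq : [/\ Hboth != Honly_a, Hboth != Honly_b & Honly_b != Honly_a].
Proof. by split; apply/negP => /eqP/(congr1 val); rewrite /= ?inordK. Qed.

Lemma sum_I3 (F : 'I_3 -> R) : \sum_(i : 'I_3) F i = F Hboth + F Honly_a + F Honly_b.
Proof.
rewrite !big_ord_recl big_ord0 addr0 addrA.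
by congr (_ + _ + _); congr F; apply: val_inj; rewrite /= inordK.
Qed.

Lemma RES_rate_single (t0 t : R) (s : state 'I_3 'I_2) (w : 'I_2) :
  RES_rate t0 t s Honly_a w + RES_rate t0 t s Honly_b w = 1 - ln 2.
Proof.
have [_ _ ba] := H_types_neq; rewrite /RES_rate eqxx (negbTE ba) eqxx.
by case: (H_vertex_cases w) => ->; rewrite /= ?addr0 ?add0r.
Qed.

Lemma RES_rate_both (t0 t : R) (s : state 'I_3 'I_2) (w : 'I_2) :
  RES_rate t0 t s Hboth w =
  step_at t0 t * ln 2 * (if s (Hother w) == None then 1 else 2).
Proof.
rewrite /RES_rate /step_at; have [/negbTE -> /negbTE -> _] := H_types_neq.
by case: ifP; case: ifP => _ _; rewrite ?mul0r //; field.
Qed.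

Lemma RES_rate_ge0 (t0 t : R) (s : state 'I_3 'I_2) i w : 0 <= RES_rate t0 t s i w.
Proof.
have := @ln2_lt1; have := @ln2_gt0 => l0 l1.
by rewrite /RES_rate; do !case: ifP => _; lra.
Qed.

Variables (t0 : R) (pH : R -> state 'I_3 'I_2 -> R).
Hypothesis lawH : is_law t0 (RES_rate t0) pH.
Local Notation free t w := (unmatched_prob pH t w).

Lemma H_ge0 t : 0 <= t <= 1 -> forall s, 0 <= pH t s.
Proof.
move=> t01 s; apply: (law_ge0 lawH (lexx 0) (lexx 1)) => //.
  by move=> *; exact: RES_rate_ge0.
by case: lawH => p0 _ _ s'; rewrite p0; case: ifP.
Qed.

Lemma H_g_ge0 t : 0 <= t <= 1 -> 0 <= H_g pH t.
Proof. by move=> t01; apply: sumr_ge0 => s _; exact: H_ge0. Qed.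

Lemma H_g_le1 t : 0 <= t <= 1 -> H_g pH t <= 1.
Proof. by move=> t01; rewrite -(law_mass1 lawH t01) sum_le_total //; exact: H_ge0. Qed.

Lemma H_free_ge0 t w : 0 <= t <= 1 -> 0 <= free t w.
Proof. by move=> t01; apply: sumr_ge0 => s _; exact: H_ge0. Qed.

Lemma H_free0 w : free 0 w = 1.
Proof.
by rewrite /unmatched_prob (law_sum_init lawH (fun s : state _ _ => s w == None)) ffunE.
Qed.

Lemma H_outflow t w : 0 <= t <= 1 ->
  \sum_(i : 'I_3) \sum_(s : state _ _ | s w == None) pH t s * RES_rate t0 t s i w =
  (1 - ln 2) * free t w +
  step_at t0 t * ln 2 * (free t w + (1 - free t (Hother w) - H_g pH t)).
Proof.
move=> t01; rewrite sum_I3 -addrA -big_split /= addrC.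
under eq_bigr do rewrite -mulrDr RES_rate_single mulrC.
under [X in _ + X]eq_bigr do rewrite RES_rate_both mulrCA.
rewrite -!mulr_sumr sum_free_weighted (law_mass1 lawH t01).
congr (_ + _ * (_ + (_ - _ - _))).
by case: (H_vertex_cases w) => ->; rewrite // /H_g both_probC.
Qed.

Lemma H_free_is_derive w t : 0 < t < 1 -> t != t0 ->
  is_derive t 1 (fun t => free t w) (- ((1 - ln 2) * free t w +
    step_at t0 t * ln 2 * (free t w + (1 - free t (Hother w) - H_g pH t)))).
Proof.
move=> t01 tt0; rewrite -H_outflow; first exact: (unmatched_prob_is_derive lawH).
by case/andP: t01 => *; rewrite !ltW.
Qed.

Lemma H_free_sym t : 0 <= t <= 1 -> free t Hb = free t Ha.
Proof.
move=> t01; pose e t := free t Hb - free t Ha.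
suff : e t * e t = 0 by move/eqP; rewrite mulf_eq0 orbb subr_eq0 => /eqP.
apply: (@gronwall_eq0 _ (fun t => e t * e t) 0 t0 0 1) => //.
- by apply: within_continuousM; apply: within_continuousB;
    exact: (law_sum_continuous lawH).
- by rewrite /e !H_free0 subrr mulr0.
- by move=> x _; rewrite -expr2 sqr_ge0.
move=> x x01 xt0.
have e_der := is_derive_sub (H_free_is_derive Hb x01 xt0) (H_free_is_derive Ha x01 xt0).
eexists; first by apply: is_derive_mul e_der _.
rewrite mul0r; set L := (X in X <= 0); set k := 1 - ln 2 + 2 * (step_at t0 x * ln 2).
have -> : L = - (2 * k) * (e x * e x) by rewrite /L /k /e /Hother /=; ring.
have := step_at01 t0 x; have := @ln2_gt0; have := @ln2_lt1 => l1 l0 /andP[c0 _].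
have k_ge0 : 0 <= 2 * k by rewrite /k; have := mulr_ge0 c0 (ltW l0); lra.
by rewrite mulNr oppr_le0 (mulr_ge0 k_ge0) // -expr2 sqr_ge0.
Qed.

Lemma H_free_gt0 t : 0 <= t <= 1 -> 0 < free t Ha.
Proof.
move=> /andP[t_ge0 t_le1].
have := @gronwall_expR_le _ (fun t => free t Ha) 2 t0 0 t t_ge0.
rewrite mulr0 expR0 H_free0 mul1r => /(_ _ _)/wrap[].
- apply: continuous_subspaceW (subset_itv_cc (lexx 0) t_le1) _.
  exact: (law_sum_continuous lawH).
- move=> x /andP[x_gt0 xt] xt0.
  have x01 : 0 < x < 1 by rewrite x_gt0 (lt_le_trans xt t_le1).
  have x01' : 0 <= x <= 1 by case/andP: x01 => *; rewrite !ltW.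
  eexists; first exact: H_free_is_derive x01 xt0.
  have /andP[X_ge0 X_le] : 0 <= free x Ha + (1 - free x Hb - H_g pH x) <= 2 * free x Ha.
    have := sum_free_weighted (pH x) Ha Hb; rewrite (law_mass1 lawH x01') => <-.
    rewrite mulr_sumr.
    apply/andP; split; [apply: sumr_ge0 | apply: ler_sum] => s _;
      by have := H_ge0 x01' s; case: ifP; lra.
  have := step_at01 t0 x; have := @ln2_gt0; have := @ln2_lt1 => l1 l0 /andP[c0 c1].
  have cX : step_at t0 x * ln 2 * (free x Ha + (1 - free x Hb - H_g pH x))
      <= ln 2 * (2 * free x Ha).
    rewrite -mulrA; apply: le_trans (ler_piMl _ c1) _; first exact: mulr_ge0 (ltW l0) X_ge0.
    by rewrite ler_pM2l.
  have := H_free_ge0 Ha x01'; rewrite /Hother /=; nra.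
by move=> lb; rewrite -(pmulr_rgt0 _ (expR_gt0 (2 * t))); lra.
Qed.

Lemma H_q1_is_derive t : 0 < t < 1 -> t != t0 ->
  is_derive t 1 (H_q1 pH) ((1 - ln 2) * free t Ha).
Proof.
move=> t01 tt0; apply: (is_derive_eq (edge_prob_is_derive lawH Honly_a Ha t01 tt0)).
rewrite mulr_sumr; apply: eq_bigr => s _.
by rewrite /RES_rate eqxx mulrC.
Qed.

Lemma H_q2_is_derive t : 0 < t < 1 -> t != t0 ->
  is_derive t 1 (H_q2 pH) (ln 2 * (step_at t0 t * (1 - H_g pH t))).
Proof.
move=> t01 tt0; have t01' : 0 <= t <= 1 by case/andP: t01 => *; rewrite !ltW.
apply: (is_derive_eq (edge_prob_is_derive lawH Hboth Ha t01 tt0)).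
under eq_bigr do rewrite RES_rate_both mulrCA.
rewrite -mulr_sumr sum_free_weighted (law_mass1 lawH t01') -/(free t Hb).
by rewrite (H_free_sym t01') /unmatched_prob /H_g /both_prob; ring.
Qed.

End ReferenceProcess.

(** * Algorithm GEN *)

Lemma card_set_mem (T : finType) (e : T -> bool) : #|[set k | e k]| = #|[pred k | e k]|.
Proof. by apply: eq_card => k; rewrite !inE /=; apply/asboolP/idP. Qed.

Lemma set1_memE (T : finType) (e : T -> bool) j :
  [set k | e k] = [set j] -> forall k, e k = (k == j).
Proof.
move=> ej k; have /= ek := congr1 (fun A => A k) ej.
by apply/idP/eqP => [ek'|kj]; [rewrite -ek | rewrite ek].
Qed.

Lemma set2_memE (T : finType) (e : T -> bool) j1 j2 :
  [set k | e k] = [set j1; j2] -> forall k, e k = (k == j1) || (k == j2).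
Proof.
move=> ej k; have /= ek := congr1 (fun A => A k) ej.
apply/idP/orP => [|[] /eqP kj]; rewrite ek; [|by left | by right].
by case=> ->; rewrite eqxx; [left | right].
Qed.

Section GEN.
Variables (R : realType) (I J : finType) (E : I -> J -> bool) (lam : I -> R)
  (x : I -> J -> R) (lab : I -> J -> bool) (t0 : R)
  (pH : R -> state 'I_3 'I_2 -> R) (p : R -> state I J -> R).
Hypotheses (SA : standing_assumption E lam x) (VL : valid_labeling E lam x lab)
  (lawH : is_law t0 (RES_rate t0) pH) (lawG : is_law t0 (GEN_rate E lam lab t0 pH p) p).
Local Notation st := (state I J).
Local Notation rate := (GEN_rate E lam lab t0 pH p).
Local Notation gbar t := (1 - H_g pH t).
Local Notation notboth t u v := (1 - both_prob p t u v).
Local Notation free t u := (unmatched_prob p t u).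
Local Notation freeH t := (unmatched_prob pH t Ha).

Definition other_nbr (i : I) (u : J) : J := odflt u [pick v | E i v && (v != u)].

Lemma x_gt0 i u : E i u -> 0 < x i u.
Proof.
move=> Eiu; case: SA => lam_gt0 _ _ /(_ i) [[j [Ei xj]]|[j1 [j2 [_ Ei x1 x2]]]].
  by move: Eiu; rewrite (set1_memE Ei) => /eqP ->; rewrite xj.
by move: Eiu; rewrite (set2_memE Ei) => /orP[] /eqP ->; rewrite ?x1 ?x2 divr_gt0.
Qed.

Lemma GEN_rate_labeled i u t s : E i u -> lab i u -> rate t s i u = x i u.
Proof.
move=> Eiu lb; rewrite /GEN_rate Eiu /= card_set_mem.
case: SA => _ _ _ /(_ i) [[j [Ei xj]]|[j1 [j2 [j12 Ei x1 x2]]]].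
  have Ek := set1_memE Ei; have uj : u = j by apply/eqP; rewrite -Ek.
  by rewrite (eq_card Ek) card1 eqxx uj xj.
have Ek := set2_memE Ei; rewrite (eq_card Ek) card2 j12 lb /=.
by move: Eiu; rewrite Ek => /orP[] /eqP ->; rewrite ?x1 ?x2 mul1r.
Qed.

Lemma GEN_rate_unlabeled i u : E i u -> ~~ lab i u ->
  other_nbr i u != u /\
  forall t s, rate t s i u = x i u * step_at t0 t *
    (gbar t / notboth t u (other_nbr i u)) * (if s (other_nbr i u) == None then 1 else 2).
Proof.
move=> Eiu nlb; case: SA => _ _ _ /(_ i) [fc|[j1 [j2 [j12 Ei x1 x2]]]].
  by case: VL => /(_ i u Eiu fc) lb _; rewrite lb in nlb.
have Ek := set2_memE Ei.
have xu : x i u = lam i / 2 by move: Eiu; rewrite Ek => /orP[] /eqP ->.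
have [v [vu Ev]] : exists v, v != u /\ forall k, E i k && (k != u) = (k == v).
  have [->|->] : u = j1 \/ u = j2 by move: Eiu; rewrite Ek => /orP[] /eqP; [left | right].
    exists j2; split=> [|k]; first by rewrite eq_sym.
    by rewrite Ek; case: (eqVneq k j1) => [->|] /=; rewrite ?(negbTE j12) ?andbT.
  exists j1; split=> // k; rewrite Ek.
  by case: (eqVneq k j2) => [->|] /=; rewrite ?andbF ?orbF ?andbT // eq_sym (negbTE j12).
have -> : other_nbr i u = v.
  rewrite /other_nbr; case: pickP => [k|/(_ v)]; first by rewrite Ev => /eqP.
  by rewrite Ev eqxx.
split => // t s; rewrite /GEN_rate Eiu /= card_set_mem (eq_card Ek) card2 j12 /=.
rewrite (negbTE nlb) /step_at; case: ifP => _; last by rewrite !mulr0 !mul0r.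
rewrite (eq_bigl _ _ Ev) big_pred1_eq xu invfM.
by set G := (notboth t u v)^-1; case: ifP => _; field.
Qed.

Lemma sum_x_unlabeled u : \sum_(i | E i u && ~~ lab i u) x i u = ln 2.
Proof.
case: SA VL => _ _ x_sum1 _ [_ x_sum_lab].
by have := x_sum1 u; rewrite (bigID (fun i => lab i u)) /= x_sum_lab; lra.
Qed.

Lemma GEN_flow_labeled i u t : E i u -> lab i u ->
  \sum_(s : st | s u == None) p t s * rate t s i u = x i u * free t u.
Proof.
move=> Eiu lb; rewrite /unmatched_prob mulr_sumr; apply: eq_bigr => s _.
by rewrite GEN_rate_labeled // mulrC.
Qed.

Lemma GEN_flow_unlabeled i u t : 0 <= t <= 1 -> E i u -> ~~ lab i u ->
  let v := other_nbr i u in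
  \sum_(s : st | s u == None) p t s * rate t s i u =
  x i u * step_at t0 t * (gbar t / notboth t u v) * (notboth t u v + free t u - free t v).
Proof.
move=> t01 Eiu nlb v; have [_ rate_eq] := GEN_rate_unlabeled Eiu nlb.
under eq_bigr do rewrite rate_eq mulrCA.
rewrite -mulr_sumr sum_free_weighted (law_mass1 lawG t01).
by congr (_ * _); rewrite /unmatched_prob /both_prob; ring.
Qed.

Lemma GEN_outflow u t : 0 <= t <= 1 ->
  \sum_i \sum_(s : st | s u == None) p t s * rate t s i u =
  (1 - ln 2) * free t u + \sum_(i | E i u && ~~ lab i u)
    x i u * step_at t0 t * (gbar t / notboth t u (other_nbr i u)) *
    (notboth t u (other_nbr i u) + free t u - free t (other_nbr i u)).
Proof.
move=> t01; rewrite (bigID (fun i => E i u)) /= [X in _ + X]big1 ?addr0; last first.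
  by move=> i /negbTE Eiu; apply: big1 => s _; rewrite /GEN_rate Eiu mulr0.
rewrite (bigID (fun i => lab i u)) /=; congr (_ + _).
  case: VL => _ /(_ u) <-; rewrite mulr_suml; apply: eq_bigr => i /andP[Eiu lb].
  exact: GEN_flow_labeled.
by apply: eq_bigr => i /andP[Eiu nlb]; exact: GEN_flow_unlabeled.
Qed.

Lemma GEN_rate_ge0 t : (forall u v, u != v -> 0 < notboth t u v) -> 0 <= gbar t ->
  forall (s : st) i j, 0 <= rate t s i j.
Proof.
move=> notboth_gt0 gbar_ge0 s i j; rewrite /GEN_rate.
have lam_ge0 : 0 <= lam i by case: SA => lam_gt0 _ _ _; exact: ltW.
do 2!case: ifP => // _; rewrite mulr_ge0 //.
case: ifP => _; first by rewrite mul1r invr_ge0 ler0n.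
case: ifP => // _; apply: sumr_ge0 => v /andP[_ vj] /=.
have G_gt0 := notboth_gt0 j v (ltac:(by rewrite eq_sym)).
by case: ifP => _; rewrite divr_ge0 ?mulr_ge0 // ltW.
Qed.

Local Notation dev t u := (free t u - freeH t).
Local Notation weight t i u :=
  (x i u * step_at t0 t * (gbar t / notboth t u (other_nbr i u))).

(* The factor [1 / notboth] in the GEN rates cancels the [notboth] term of the
   flow [GEN_flow_unlabeled], leaving the flow of the reference process plus a
   coupling between the deviations at the two endpoints. *)
Lemma GEN_dev_is_derive u t : 0 < t < 1 -> t != t0 ->
  (forall a c, a != c -> notboth t a c != 0) ->
  is_derive t 1 (fun t => dev t u) (- (1 - ln 2) * dev t u -
    \sum_(i | E i u && ~~ lab i u) weight t i u * (dev t u - dev t (other_nbr i u))).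
Proof.
move=> t01 tt0 notboth_neq0; have t01' : 0 <= t <= 1 by case/andP: t01 => *; rewrite !ltW.
apply: (is_derive_eq (is_derive_sub (unmatched_prob_is_derive lawG u t01 tt0)
  (H_free_is_derive lawH Ha t01 tt0))).
rewrite GEN_outflow // [Hother Ha]/Hother /= (H_free_sym lawH t01').
suff -> : \sum_(i | E i u && ~~ lab i u) weight t i u *
    (notboth t u (other_nbr i u) + free t u - free t (other_nbr i u)) =
  step_at t0 t * gbar t * ln 2 +
  \sum_(i | E i u && ~~ lab i u) weight t i u * (dev t u - dev t (other_nbr i u)).
  by ring.
rewrite -(sum_x_unlabeled u) mulr_sumr -big_split /=; apply: eq_bigr => i /andP[Eiu nlb].
have [vu _] := GEN_rate_unlabeled Eiu nlb.
have G_neq0 := notboth_neq0 _ _ (ltac:(by rewrite eq_sym vu) : u != other_nbr i u).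
by field.
Qed.

Lemma gbar01 t : 0 <= t <= 1 -> 0 <= gbar t <= 1.
Proof. by move=> t01; have := H_g_ge0 lawH t01; have := H_g_le1 lawH t01; lra. Qed.

Lemma notboth_continuous a c : {within `[0, 1], continuous (fun t => notboth t a c)}.
Proof.
by apply: within_continuousB; [exact: within_continuous_cst | exact: (law_sum_continuous lawG)].
Qed.

Lemma free_le_notboth t a c : 0 <= t <= 1 -> (forall s, 0 <= p t s) ->
  free t a <= notboth t a c.
Proof. by move=> t01 p_ge0; rewrite -(law_mass1 lawG t01); exact: sum_free_le_not_both. Qed.

Lemma weight_le t eta : 0 <= t <= 1 -> 0 < eta ->
  (forall a c, a != c -> eta <= notboth t a c) -> forall u,
  (forall i, E i u && ~~ lab i u -> 0 <= weight t i u) /\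
  \sum_(i | E i u && ~~ lab i u) weight t i u <= eta^-1.
Proof.
move=> t01 eta_gt0 notboth_ge u.
have [/andP[c0 c1] /andP[g0 g1]] := (step_at01 t0 t, gbar01 t01).
have G_ge i : E i u && ~~ lab i u -> eta <= notboth t u (other_nbr i u).
  by case/andP=> Eiu nlb; apply: notboth_ge; have [vu _] := GEN_rate_unlabeled Eiu nlb;
    rewrite eq_sym.
have ratio_ge0 i : E i u && ~~ lab i u -> 0 <= gbar t / notboth t u (other_nbr i u).
  by move=> iu; rewrite divr_ge0 // (le_trans (ltW eta_gt0) (G_ge i iu)).
have ratio_le i : E i u && ~~ lab i u -> gbar t / notboth t u (other_nbr i u) <= eta^-1.
  move=> iu; have G_gt0 := lt_le_trans eta_gt0 (G_ge i iu).
  apply: le_trans (ler_piMl _ g1) _; first by rewrite invr_ge0 ltW.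
  by rewrite lef_pV2 ?posrE ?G_ge.
have x_ge0 i : E i u && ~~ lab i u -> 0 <= x i u by case/andP => /x_gt0 /ltW.
split=> [i iu|]; first by rewrite mulr_ge0 ?ratio_ge0 // mulr_ge0 ?x_ge0.
apply: (@le_trans _ _ (\sum_(i | E i u && ~~ lab i u) x i u / eta)).
  apply: ler_sum => i iu; rewrite -mulrA ler_wpM2l ?x_ge0 //.
  by apply: le_trans (ler_piMl (ratio_ge0 i iu) c1) (ratio_le i iu).
rewrite -mulr_suml sum_x_unlabeled ler_piMl ?invr_ge0 ?ltW //.
exact: ln2_lt1.
Qed.

Lemma sq_dev_is_derive_le t eta : 0 < t < 1 -> t != t0 -> 0 < eta ->
  (forall a c, a != c -> eta <= notboth t a c) ->
  exists2 d, is_derive t 1 (fun t => \sum_w dev t w * dev t w) d &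
    d <= #|J|%:R / eta * \sum_w dev t w * dev t w.
Proof.
move=> t01 tt0 eta_gt0 notboth_ge.
have t01' : 0 <= t <= 1 by case/andP: t01 => *; rewrite !ltW.
have notboth_neq0 a c : a != c -> notboth t a c != 0.
  by move/notboth_ge/(lt_le_trans eta_gt0)/lt0r_neq0.
have dev_der w := GEN_dev_is_derive w t01 tt0 notboth_neq0.
eexists; first by apply: is_derive_big => w _; apply: is_derive_mul (dev_der w) _.
have := @sum_drift_le _ J I (fun w => dev t w) (1 - ln 2) eta^-1
  (fun u i => E i u && ~~ lab i u) (fun i u => weight t i u) other_nbr.
rewrite big_split /= => /(_ _ _ _)/wrap[].
- by rewrite subr_ge0 ltW // ln2_lt1.
- by move=> u i; case: (weight_le t01' eta_gt0 notboth_ge u) => w_ge0 _; apply: w_ge0.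
- by move=> u; case: (weight_le t01' eta_gt0 notboth_ge u).
by rewrite -mulrA mulrCA; lra.
Qed.

Lemma notboth_bounded_below u : 0 <= u < 1 -> (forall s, 0 <= p u s) ->
  (forall w, free u w = freeH u) ->
  exists eta b, [/\ 0 < eta, u < b <= 1 &
    forall t, u <= t <= b -> forall a c, eta <= notboth t a c].
Proof.
move=> /andP[u0 u1] p_ge0 free_eq.
have u01 : 0 <= u <= 1 by rewrite u0 ltW.
pose eta := freeH u / 2.
have eta_gt0 : 0 < eta by rewrite divr_gt0 // (H_free_gt0 lawH u01).
have near_u (ac : J * J) : exists2 d, 0 < d & forall t, `|t - u| < d ->
    0 <= t <= 1 -> eta < notboth t ac.1 ac.2.
  have [d d_gt0 Gd] := within_continuous_epsilon (@notboth_continuous ac.1 ac.2)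
    (ltac:(by rewrite /= in_itv /=) : [set` `[0, 1]] u) eta_gt0.
  exists d => // t tu t01; have := Gd t (ltac:(by rewrite /= in_itv /=)) tu.
  rewrite distrC; have := free_le_notboth ac.1 ac.2 u01 p_ge0; rewrite free_eq /eta.
  have := ler_norm (notboth u ac.1 ac.2 - notboth t ac.1 ac.2); lra.
have [d d_gt0 Gd] := fin_common_delta near_u.
pose m := Num.min d (1 - u).
have [m_gt0 md m1] : [/\ 0 < m, m <= d & m <= 1 - u].
  by split; rewrite ?lt_min ?d_gt0 ?subr_gt0 ?u1 // ge_min lexx ?orbT.
exists eta, (u + m / 2); split => //; first by apply/andP; split; lra.
move=> t /andP[ut tb] a c; apply: ltW; apply: (Gd t _ (a, c)); last by apply/andP; split; lra.
by rewrite ger0_norm; lra.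
Qed.

Definition GEN_invariant t := (forall s, 0 <= p t s) /\ (forall w, free t w = freeH t).

Lemma GEN_invariant_right u : 0 <= u < 1 -> (forall t, 0 <= t <= u -> GEN_invariant t) ->
  exists2 d, 0 < d & forall t, u < t < u + d -> t <= 1 -> GEN_invariant t.
Proof.
move=> u01 inv; have [u0 u1] := andP u01.
have [pu_ge0 free_u] := inv u (ltac:(by rewrite u0 lexx)).
have [eta [b [eta_gt0 /andP[ub b1] notboth_ge]]] := notboth_bounded_below u01 pu_ge0 free_u.
have p_ge0 : forall t, u <= t <= b -> forall s, 0 <= p t s.
  apply: (law_ge0 lawG u0 b1) => // t /andP[ut tb] _ s i j _.
  have t01 : 0 <= t <= 1 by apply/andP; split; lra.
  apply: GEN_rate_ge0; last by case/andP: (gbar01 t01).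
  by move=> a c _; apply: lt_le_trans eta_gt0 (notboth_ge t _ a c); rewrite !ltW.
have S0 : forall t, u <= t <= b -> \sum_w dev t w * dev t w = 0.
  apply: (@gronwall_eq0 _ (fun t => \sum_w dev t w * dev t w) (#|J|%:R / eta) t0).
  - apply: continuous_subspaceW (subset_itv_cc u0 b1) _.
    apply: within_continuous_big => w _.
    by apply: within_continuousM; apply: within_continuousB;
      [exact: (law_sum_continuous lawG) | exact: (law_sum_continuous lawH)
      | exact: (law_sum_continuous lawG) | exact: (law_sum_continuous lawH)].
  - by apply: big1 => w _; rewrite free_u subrr mulr0.
  - by move=> t _; apply: sumr_ge0 => w _; rewrite -expr2 sqr_ge0.
  - move=> t /andP[ut tb] tt0; apply: sq_dev_is_derive_le => //.
      by apply/andP; split; lra.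
    by move=> a c _; apply: notboth_ge; rewrite !ltW.
exists (b - u) => [|t /andP[ut tb] t1]; first by rewrite subr_gt0.
have tub : u <= t <= b by apply/andP; split; lra.
split=> [|w]; first exact: p_ge0.
have /eqP : dev t w * dev t w = 0.
  by apply: (psumr_eq0P _ (S0 t tub)) => // v _; rewrite -expr2 sqr_ge0.
by rewrite mulf_eq0 orbb subr_eq0 => /eqP.
Qed.

Lemma GEN_invariant_all : forall t, 0 <= t <= 1 -> GEN_invariant t.
Proof.
apply: continuity_induction.
- split=> [s|w]; first by case: lawG => -> _ _; case: ifP.
  rewrite /unmatched_prob (law_sum_init lawG (fun s : st => s w == None)) ffunE.
  by rewrite (law_sum_init lawH (fun s => s Ha == None)) ffunE.
- move=> u u01 inv; split=> [s|w].
    case: lawG => _ cp _; apply: (within_continuous_left_ge0 (cp s) u01) => t t0u.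
    by case: (inv t t0u) => ->.
  apply: (@within_continuous_left_eq _ (fun t => free t w) (fun t => freeH t) 0 1) => //.
  - exact: (law_sum_continuous lawG).
  - exact: (law_sum_continuous lawH).
  - by move=> t t0u; case: (inv t t0u) => _ ->.
- exact: GEN_invariant_right.
Qed.

Lemma edge_prob_labeled_is_derive i u t : E i u -> lab i u -> 0 < t < 1 -> t != t0 ->
  is_derive t 1 (fun t => edge_prob p t i u) (x i u * freeH t).
Proof.
move=> Eiu lb t01 tt0; have t01' : 0 <= t <= 1 by case/andP: t01 => *; rewrite !ltW.
apply: (is_derive_eq (edge_prob_is_derive lawG i u t01 tt0)).
by rewrite GEN_flow_labeled //; case: (GEN_invariant_all t01') => _ ->.
Qed.

Lemma edge_prob_unlabeled_is_derive i u t : E i u -> ~~ lab i u -> 0 < t < 1 -> t != t0 ->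
  is_derive t 1 (fun t => edge_prob p t i u) (x i u * (step_at t0 t * gbar t)).
Proof.
move=> Eiu nlb t01 tt0; have t01' : 0 <= t <= 1 by case/andP: t01 => *; rewrite !ltW.
apply: (is_derive_eq (edge_prob_is_derive lawG i u t01 tt0)).
have [p_ge0 free_eq] := GEN_invariant_all t01'.
rewrite GEN_flow_unlabeled // !free_eq addrK.
have : 0 < notboth t u (other_nbr i u).
  by apply: lt_le_trans (H_free_gt0 lawH t01') _; rewrite -(free_eq u) free_le_notboth.
by move=> /lt0r_neq0 G_neq0; rewrite -mulrA divfK // mulrA.
Qed.

End GEN.

Unset Implicit Arguments.
Local Close Scope classical_set_scope.

Theorem lemma4p10 (R : realType) (I J : finType) (E : I -> J -> bool)
  (lam : I -> R) (x : I -> J -> R) (lab : I -> J -> bool) (t0 : R)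
  (pH : R -> state 'I_3 'I_2 -> R) (p : R -> state I J -> R) :
  standing_assumption E lam x ->
  valid_labeling E lam x lab ->
  is_law t0 (RES_rate t0) pH ->
  is_law t0 (GEN_rate E lam lab t0 pH p) p ->
  forall t : R, 0 <= t <= 1 ->
  forall (i : I) (u : J), E i u ->
    (lab i u -> edge_prob p t i u / x i u = H_q1 pH t / (1 - ln 2)) /\
    (~~ lab i u -> edge_prob p t i u / x i u = H_q2 pH t / ln 2).
Proof.
move=> SA VL lawH lawG t t01 i u Eiu.
have x_neq0 := lt0r_neq0 (x_gt0 SA Eiu).
have ln2_neq0 : ln 2 != 0 :> R by exact: lt0r_neq0 (ln2_gt0 R).
have ln2_neq1 : 1 - ln 2 != 0 :> R by rewrite subr_eq0 eq_sym (lt_eqF (ln2_lt1 R)).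
split=> lb;
  apply: (div_eq_of_is_derive (f := fun t => edge_prob p t i u) (t0 := t0) x_neq0) => //;
  do ?[exact: (edge_prob_continuous lawG) | exact: (edge_prob_continuous lawH)
      | exact: (edge_prob0 lawG) | exact: (edge_prob0 lawH)];
  move=> s s01 st0.
- exists (unmatched_prob pH s Ha).
    exact: (edge_prob_labeled_is_derive SA VL lawH lawG Eiu lb s01 st0).
  exact: (H_q1_is_derive lawH s01 st0).
- exists (step_at t0 s * (1 - H_g pH s)).
    exact: (edge_prob_unlabeled_is_derive SA VL lawH lawG Eiu lb s01 st0).
  exact: (H_q2_is_derive lawH s01 st0).
Qed.
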